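(* In the setting described in the context, let $\phi,\phi_0\in\Gamma$ be, respectively, a quasi-lower solution and a quasi-upper solution of the wave equation $(W)$, with $\phi(t)\le\phi_0(t)$ for all $t\in\mathbb{R}$. Let $\phi_1:=G(H(\phi_0))$. Then (i) $\phi_1\in\Gamma$; and (ii) $\phi_1$ is an upper solution of $(W)$ and $\phi(t)\le\phi_1(t)\le\phi_0(t)$ for all $t\in\mathbb{R}$.
   Context: Fix $n\ge1$, $\tau\ge0$, a wave speed $c>0$, $D=\mathrm{diag}(d_1,\dots,d_n)$ with all $d_i>0$, and $\mathbf K=(K_1,\dots,K_n)^T$ with all $K_i>0$. Vectors in $\mathbb{R}^n$ are ordered componentwise: $x\le y$ iff $x_i\le y_i$ for all $i$; $[\mathbf 0,\mathbf K]=\{v:\mathbf 0\le v\le\mathbf K\}$. Let $f:C([-\tau,0],\mathbb{R}^n)\to\mathbb{R}^n$ be continuous with $f(\hat 0)=f(\hat K)=0$ and $f(\hat u)\neq0$ for every $u\in[\mathbf 0,\mathbf K]\setminus\{\mathbf 0,\mathbf K\}$, where $\hat u$ denotes the constant function with value $u$. Let $X_c=C([-c\tau,0],\mathbb{R}^n)$ and $f_c:X_c\to\mathbb{R}^n$, $f_c(\psi)=f(\psi^c)$ with $\psi^c(\theta)=\psi(c\theta)$, $\theta\in[-\tau,0]$. For $\phi\in C(\mathbb{R},\mathbb{R}^n)$ and $t\in\mathbb{R}$, $\phi_t\in X_c$ is $\phi_t(s)=\phi(t+s)$. The wave equation is $$D\phi''(t)-c\phi'(t)+f_c(\phi_t)=\mathbf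 0,\quad t\in\mathbb{R}.\tag{W}$$ Assume there is $\beta=\mathrm{diag}(\beta_1,\dots,\beta_n)$ with all $\beta_i>0$ such that $f_c(\phi)-f_c(\psi)+\beta[\phi(0)-\psi(0)]\ge\mathbf 0$ whenever $\phi,\psi\in X_c$ with $\mathbf 0\le\psi(\theta)\le\phi(\theta)\le\mathbf K$ for all $\theta$. Define $H(\phi)(t)=f_c(\phi_t)+\beta\phi(t)$. Let $\Gamma$ be the set of nondecreasing $\varphi\in C(\mathbb{R},\mathbb{R}^n)$ with $\lim_{t\to-\infty}\varphi(t)=\mathbf 0$ and $\lim_{t\to+\infty}\varphi(t)=\mathbf K$. For $i=1,\dots,n$ let $\lambda_{1i}=\frac{c-\sqrt{c^2+4\beta_id_i}}{2d_i}<0<\lambda_{2i}=\frac{c+\sqrt{c^2+4\beta_id_i}}{2d_i}$. For bounded $h:\mathbb{R}\to\mathbb{R}^n$, $G(h)$ is the unique bounded $C^1$ solution of $Dx''-cx'-\beta x+h=\mathbf 0$, given componentwise by $G_i(h)(t)=\frac{1}{d_i(\lambda_{2i}-\lambda_{1i})}\big(\int_{-\infty}^te^{\lambda_{1i}(t-s)}h_i(s)ds+\int_t^\infty e^{\lambda_{2i}(t-s)}h_i(s)ds\big)$. An upper solution of (W) is $\rho\in C^2(\mathbb{R},\mathbb{R}^n)$ with $\rho,\rho',\rho''$ bounded and $D\rho''(t)-c\rho'(t)+f_c(\rho_t)\le\mathbf 0$ for all $t$. A quasi-upper solution of (W) is $\rho\in C^1(\mathbb{R},\mathbb{R}^n)$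 with $\rho,\rho'$ bounded on $\mathbb{R}$, $\rho''$ existing, continuous and bounded on $\mathbb{R}\setminus\{0\}$ with one-sided limits at $0$, and $D\rho''(t)-c\rho'(t)+f_c(\rho_t)\le\mathbf 0$ for all $t\ne0$. Quasi-lower solutions are defined the same way with the inequality reversed ($\ge\mathbf 0$). *)

From Stdlib Require Import Reals.
From Coquelicot Require Import Coquelicot.
From mathcomp Require Import fintype.
Open Scope R_scope.

Definition vec (n : nat) := 'I_n -> R.
Definition vle {n} (x y : vec n) : Prop := forall i, x i <= y i.
Definition vzero {n} : vec n := fun _ => 0.

(* a function R -> R^n, used for elements of C([a,b],R^n) (only the values on
   [a,b] matter) and for profiles phi : R -> R^n *)
Definition vfun (n : nat) := R -> vec n.

Definition cont_on {n} (a b : R) (g : vfun n) : Prop :=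
  forall x, a <= x <= b -> forall eps, 0 < eps -> exists delta, 0 < delta /\
    forall y, a <= y <= b -> Rabs (y - x) < delta ->
      forall i, Rabs (g y i - g x i) < eps.

(* f : C([-tau,0],R^n) -> R^n is represented by a map on vfun that only
   depends on the values on [-tau,0] and is continuous for the sup norm *)
Definition f_local {n} (tau : R) (f : vfun n -> vec n) : Prop :=
  forall phi psi : vfun n, (forall th, -tau <= th <= 0 -> phi th = psi th) ->
    f phi = f psi.

Definition f_continuous {n} (tau : R) (f : vfun n -> vec n) : Prop :=
  forall phi, cont_on (-tau) 0 phi -> forall eps, 0 < eps -> exists delta, 0 < delta /\
    forall psi, cont_on (-tau) 0 psi ->
      (forall th, -tau <= th <= 0 -> forall i, Rabs (psi th i - phi th i) < delta) ->
      forall i, Rabs (f psi i - f phi i) < eps.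

Definition hat {n} (u : vec n) : vfun n := fun _ => u.

Definition f_c {n} (c : R) (f : vfun n -> vec n) (psi : vfun n) : vec n :=
  f (fun th => psi (c * th)).

Definition shift {n} (phi : vfun n) (t : R) : vfun n := fun s => phi (t + s).

Definition Hop {n} (c : R) (f : vfun n -> vec n) (beta : vec n) (phi : vfun n) : vfun n :=
  fun t i => f_c c f (shift phi t) i + beta i * phi t i.

Definition lam1 (c d b : R) : R := (c - sqrt (c ^ 2 + 4 * b * d)) / (2 * d).
Definition lam2 (c d b : R) : R := (c + sqrt (c ^ 2 + 4 * b * d)) / (2 * d).

Definition Gop {n} (c : R) (d beta : vec n) (h : vfun n) : vfun n :=
  fun t i =>
    let l1 := lam1 c (d i) (beta i) in
    let l2 := lam2 c (d i) (beta i) in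
    / (d i * (l2 - l1)) *
    (RInt_gen (fun s => exp (l1 * (t - s)) * h s i) (Rbar_locally m_infty) (at_point t)
     + RInt_gen (fun s => exp (l2 * (t - s)) * h s i) (at_point t) (Rbar_locally p_infty)).

Definition bounded {n} (g : vfun n) : Prop :=
  exists M, forall t i, Rabs (g t i) <= M.

Definition bounded_off0 {n} (g : vfun n) : Prop :=
  exists M, forall t i, t <> 0 -> Rabs (g t i) <= M.

Definition in_Gamma {n} (K : vec n) (phi : vfun n) : Prop :=
  (forall t i, continuous (fun s => phi s i) t) /\
  (forall t s i, t <= s -> phi t i <= phi s i) /\
  (forall i, is_lim (fun s => phi s i) m_infty 0) /\
  (forall i, is_lim (fun s => phi s i) p_infty (K i)).

(* wave operator D rho'' - c rho' + f_c(rho_t), given rho' = r1, rho'' = r2 *)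
Definition wave {n} (c : R) (D : vec n) (f : vfun n -> vec n)
  (rho r1 r2 : vfun n) (t : R) (i : 'I_n) : R :=
  D i * r2 t i - c * r1 t i + f_c c f (shift rho t) i.

Definition upper_solution {n} (c : R) (D : vec n) (f : vfun n -> vec n) (rho : vfun n) : Prop :=
  exists r1 r2 : vfun n,
    (forall t i, is_derive (fun s => rho s i) t (r1 t i)) /\
    (forall t i, is_derive (fun s => r1 s i) t (r2 t i)) /\
    (forall t i, continuous (fun s => r2 s i) t) /\
    bounded rho /\ bounded r1 /\ bounded r2 /\
    (forall t i, wave c D f rho r1 r2 t i <= 0).

Definition quasi_regular {n} (rho r1 r2 : vfun n) : Prop :=
    (forall t i, is_derive (fun s => rho s i) t (r1 t i)) /\
    (forall t i, continuous (fun s => r1 s i) t) /\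
    bounded rho /\ bounded r1 /\
    (forall t i, t <> 0 -> is_derive (fun s => r1 s i) t (r2 t i)) /\
    (forall t i, t <> 0 -> continuous (fun s => r2 s i) t) /\
    bounded_off0 r2 /\
    (forall i, exists l, filterlim (fun s => r2 s i) (at_left 0) (locally l)) /\
    (forall i, exists l, filterlim (fun s => r2 s i) (at_right 0) (locally l)).

Definition quasi_upper {n} (c : R) (D : vec n) (f : vfun n -> vec n) (rho : vfun n) : Prop :=
  exists r1 r2 : vfun n, quasi_regular rho r1 r2 /\
    (forall t i, t <> 0 -> wave c D f rho r1 r2 t i <= 0).

Definition quasi_lower {n} (c : R) (D : vec n) (f : vfun n -> vec n) (rho : vfun n) : Prop :=
  exists r1 r2 : vfun n, quasi_regular rho r1 r2 /\
    (forall t i, t <> 0 -> wave c D f rho r1 r2 t i >= 0).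

(* H(phi0) is nondecreasing with values in [0, beta K], and phi1 = G(H(phi0)) is the bounded
   C^2 solution of D phi1'' - c phi1' - beta phi1 = - H(phi0).  Each claimed inequality says
   that some bounded w with D w'' - c w' - beta w <= 0 away from the kink at 0 is nonnegative
   (w = phi0 - phi1, phi1 - phi and phi1(. + a) - phi1), a maximum principle proved by
   factoring the operator through its characteristic roots lam1 < 0 < lam2.  In each case the
   quasi-monotonicity of f gives the sign of the right-hand side; it also makes phi1 an upper
   solution.  The limits of phi1 at -oo and +oo follow by squeezing between phi and phi0. *)

From Pilot Require Import Defs.
From Stdlib Require Import Reals Lra Psatz.
From Coquelicot Require Import Coquelicot.
From mathcomp Require Import fintype.
Open Scope R_scope.

Lemma bounded_of_components {n} (g : vfun n) :
  (forall i, exists B, forall t, Rabs (g t i) <= B) -> Defs.bounded g.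
Proof.
  intros Hg.
  assert (Hl : forall l : list 'I_n,
             exists B, forall i, List.In i l -> forall t, Rabs (g t i) <= B).
  { induction l as [|j l [B HB]]; [exists 0; intros i []|].
    destruct (Hg j) as [Bj HBj]. exists (Rmax Bj B). intros i [<-|Hi] t.
    - eapply Rle_trans; [apply HBj | apply Rmax_l].
    - eapply Rle_trans; [apply HB; exact Hi | apply Rmax_r]. }
  destruct (Hl (ord_enum n)) as [B HB]. exists B. intros t i. apply HB.
  apply (Bool.reflect_iff _ _ (Iter.In_mem i (ord_enum n))), mem_ord_enum.
Qed.

Lemma continuous_of_eps_delta (f : R -> R) x :
  (forall eps, 0 < eps -> exists delta, 0 < delta /\
     forall y, Rabs (y - x) < delta -> Rabs (f y - f x) < eps) -> continuous f x.
Proof.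
  intros H. apply continuity_pt_filterlim. intros eps Heps.
  destruct (H eps Heps) as [delta [Hdelta Hf]].
  exists delta. split; [exact Hdelta|]. intros y [_ Hy]. apply Hf, Hy.
Qed.

Lemma continuous_of_is_derive (f : R -> R) x l : is_derive f x l -> continuous f x.
Proof. intros H. apply (@ex_derive_continuous R_AbsRing R_NormedModule). exists l; exact H. Qed.

Lemma continuous_Rplus (f g : R -> R) x :
  continuous f x -> continuous g x -> continuous (fun t => f t + g t) x.
Proof. apply (@continuous_plus R_UniformSpace R_AbsRing R_NormedModule). Qed.

Lemma continuous_Rminus (f g : R -> R) x :
  continuous f x -> continuous g x -> continuous (fun t => f t - g t) x.
Proof. apply (@continuous_minus R_UniformSpace R_AbsRing R_NormedModule). Qed.

Lemma continuous_Rmult (f g : R -> R) x :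
  continuous f x -> continuous g x -> continuous (fun t => f t * g t) x.
Proof. intros Hf Hg. apply (continuous_mult f g x); assumption. Qed.

Lemma continuous_Rscal (k : R) (f : R -> R) x :
  continuous f x -> continuous (fun t => k * f t) x.
Proof. intros H. apply continuous_Rmult; [apply continuous_const | exact H]. Qed.

Lemma is_derive_Rmult (f g : R -> R) x df dg :
  is_derive f x df -> is_derive g x dg ->
  is_derive (fun t => f t * g t) x (df * g x + f x * dg).
Proof. intros Hf Hg. exact (is_derive_mult f g x df dg Hf Hg Rmult_comm). Qed.

Lemma is_derive_exp_mul (a : R) (u : R -> R) x du : is_derive u x du ->
  is_derive (fun t => exp (a * t) * u t) x (exp (a * x) * (a * u x + du)).
Proof.
  intros Hu.
  replace (exp (a * x) * (a * u x + du)) with (a * exp (a * x) * u x + exp (a * x) * du)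
    by ring.
  apply (is_derive_Rmult (fun t => exp (a * t))); [|exact Hu].
  auto_derive; [exact I | ring].
Qed.

Lemma continuous_exp_mul (a : R) (u : R -> R) x :
  continuous u x -> continuous (fun t => exp (a * t) * u t) x.
Proof.
  intros Hu. apply continuous_Rmult; [|exact Hu].
  apply (continuous_of_is_derive _ _ (a * exp (a * x))). auto_derive; [exact I | ring].
Qed.

Lemma nonincreasing_of_derive_nonpos (E dE : R -> R) :
  (forall t, continuous E t) ->
  (forall t, t <> 0 -> is_derive E t (dE t)) -> (forall t, t <> 0 -> dE t <= 0) ->
  forall x y, x <= y -> E y <= E x.
Proof.
  intros HE HdE Hsign.
  assert (Hgap : forall x y, x <= y -> (x < 0 < y -> False) -> E y <= E x).
  { intros x y Hxy Hgap.
    set (dE0 := fun t => if Req_EM_T t 0 then 0 else dE t).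
    destruct (MVT_gen E x y dE0) as [z [_ Hz]].
    - intros t Ht. rewrite Rmin_left, Rmax_right in Ht by lra.
      unfold dE0. destruct (Req_EM_T t 0); [lra | now apply HdE].
    - intros t _. apply continuity_pt_filterlim, HE.
    - assert (dE0 z <= 0) by (unfold dE0; destruct (Req_EM_T z 0); [lra | now apply Hsign]).
      nra. }
  intros x y Hxy. destruct (Rlt_dec x 0), (Rlt_dec 0 y).
  - apply Rle_trans with (E 0); apply Hgap; lra.
  - apply Hgap; lra.
  - apply Hgap; lra.
  - apply Hgap; lra.
Qed.

Lemma exp_small_left a eps t : 0 < a -> 0 < eps -> exists s, s <= t /\ exp (a * s) < eps.
Proof.
  intros Ha Heps. set (s := Rmin t ((ln eps - 1) / a)). exists s. split; [apply Rmin_l|].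
  rewrite <- (exp_ln eps) by exact Heps. apply exp_increasing.
  assert (a * s <= a * ((ln eps - 1) / a)) by (apply Rmult_le_compat_l; [lra | apply Rmin_r]).
  replace (a * ((ln eps - 1) / a)) with (ln eps - 1) in * by (field; lra). lra.
Qed.

(* The weight exp (a x) vanishes at -oo. *)
Lemma exp_weighted_nonpos a (v : R -> R) : 0 < a ->
  (exists V, forall x, Rabs (v x) <= V) ->
  (forall x y, x <= y -> exp (a * y) * v y <= exp (a * x) * v x) ->
  forall x, v x <= 0.
Proof.
  intros Ha [V HV] Hdec x. apply Rnot_lt_le. intros Hvx.
  set (e := exp (a * x) * v x).
  assert (He : 0 < e) by (apply Rmult_lt_0_compat; [apply exp_pos | exact Hvx]).
  assert (HV0 : 0 <= V) by (eapply Rle_trans; [apply Rabs_pos | apply (HV x)]).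
  destruct (exp_small_left a (e / (V + 1)) x Ha) as [s [Hsx Hs]].
  { apply Rdiv_lt_0_compat; lra. }
  assert (Hes : e <= exp (a * s) * V).
  { eapply Rle_trans; [apply (Hdec s x Hsx)|].
    apply Rmult_le_compat_l; [left; apply exp_pos|].
    eapply Rle_trans; [apply Rle_abs | apply HV]. }
  assert (exp (a * s) * (V + 1) < e).
  { apply (Rmult_lt_compat_r (V + 1)) in Hs; [|lra].
    unfold Rdiv in Hs. rewrite Rmult_assoc, Rinv_l, Rmult_1_r in Hs by lra. exact Hs. }
  pose proof (exp_pos (a * s)). nra.
Qed.

Lemma exp_weighted_nonneg a (v : R -> R) : a < 0 ->
  (exists V, forall x, Rabs (v x) <= V) ->
  (forall x y, x <= y -> exp (a * y) * v y <= exp (a * x) * v x) ->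
  forall x, 0 <= v x.
Proof.
  intros Ha [V HV] Hdec x.
  assert (H := exp_weighted_nonpos (- a) (fun y => - v (- y))).
  rewrite <- (Ropp_involutive x). enough (- v (- - x) <= 0) by lra.
  apply H; [lra | exists V; intros y; rewrite Rabs_Ropp; apply HV |].
  intros y z Hyz. specialize (Hdec (- z) (- y) ltac:(lra)).
  replace (- a * z) with (a * - z) by ring. replace (- a * y) with (a * - y) by ring. lra.
Qed.

Section CharacteristicRoots.

Variables c d b : R.
Hypotheses (Hd : 0 < d) (Hb : 0 < b).

Let s := sqrt (c ^ 2 + 4 * b * d).

Let s_sqr : s * s = c ^ 2 + 4 * b * d.
Proof. apply sqrt_sqrt. nra. Qed.

Let abs_c_lt_s : Rabs c < s.
Proof.
  assert (0 <= s) by apply sqrt_pos.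
  rewrite <- (Rabs_pos_eq s) by lra. apply Rsqr_lt_abs_0. unfold Rsqr. nra.
Qed.

Lemma lam1_neg : lam1 c d b < 0.
Proof.
  unfold lam1. fold s. pose proof (Rle_abs c). apply Rdiv_neg_pos; lra.
Qed.

Lemma lam2_pos : 0 < lam2 c d b.
Proof.
  unfold lam2. fold s. pose proof (Rabs_maj2 c). apply Rdiv_lt_0_compat; lra.
Qed.

Lemma lam_sum : d * (lam1 c d b + lam2 c d b) = c.
Proof. unfold lam1, lam2. field. lra. Qed.

Lemma lam_prod : d * (lam1 c d b * lam2 c d b) = - b.
Proof.
  unfold lam1, lam2. fold s.
  replace (d * ((c - s) / (2 * d) * ((c + s) / (2 * d)))) with ((c * c - s * s) / (4 * d))
    by (field; lra).
  rewrite s_sqr. field. lra.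
Qed.

Lemma char_poly_factor x :
  d * x ^ 2 - c * x - b = d * ((x - lam1 c d b) * (x - lam2 c d b)).
Proof.
  pose proof lam_sum as Hsum. pose proof lam_prod as Hprod.
  set (l1 := lam1 c d b) in *. set (l2 := lam2 c d b) in *.
  rewrite <- Hsum. replace b with (- (d * (l1 * l2))) by lra. ring.
Qed.

End CharacteristicRoots.

Definition quasi_C2 (w w1 w2 : R -> R) : Prop :=
  (forall t, is_derive w t (w1 t)) /\ (forall t, continuous w1 t) /\
  (forall t, t <> 0 -> is_derive w1 t (w2 t)) /\
  (exists A, forall t, Rabs (w t) <= A) /\ (exists B, forall t, Rabs (w1 t) <= B).

(* d w'' - c w' - b w = d (d/dt - lam1) (d/dt - lam2) w: first exp(-lam1 t) (w' - lam2 w)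
   decreases, then so does exp(-lam2 t) w. *)
Lemma quasi_C2_supersolution_nonneg d c b (w w1 w2 : R -> R) : 0 < d -> 0 < b ->
  quasi_C2 w w1 w2 -> (forall t, t <> 0 -> d * w2 t - c * w1 t - b * w t <= 0) ->
  forall t, 0 <= w t.
Proof.
  intros Hd Hb [Dw [Cw1 [Dw1 [[A HA] [B HB]]]]] Hsuper.
  pose proof (lam1_neg c d b Hd Hb) as Hl1. pose proof (lam2_pos c d b Hd Hb) as Hl2.
  pose proof (lam_sum c d b Hd) as Hsum. pose proof (lam_prod c d b Hd Hb) as Hprod.
  set (l1 := lam1 c d b) in *. set (l2 := lam2 c d b) in *.
  set (v := fun t => w1 t - l2 * w t).
  assert (Dv : forall t, t <> 0 -> is_derive v t (w2 t - l2 * w1 t)).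
  { intros t Ht. apply (is_derive_minus w1); [now apply Dw1 | now apply is_derive_scal]. }
  assert (Hv : forall t, v t <= 0).
  { apply (exp_weighted_nonpos (- l1)); [lra | |].
    - exists (B + l2 * A). intros t. unfold v.
      eapply Rle_trans; [apply Rabs_triang|]. rewrite Rabs_Ropp, Rabs_mult, (Rabs_pos_eq l2) by lra.
      specialize (HA t). specialize (HB t). nra.
    - apply (nonincreasing_of_derive_nonpos _
               (fun t => exp (- l1 * t) * (- l1 * v t + (w2 t - l2 * w1 t)))).
      + intros t. apply continuous_exp_mul, continuous_Rminus; [apply Cw1|].
        apply continuous_Rscal, (continuous_of_is_derive _ _ _ (Dw t)).
      + intros t Ht. now apply is_derive_exp_mul, Dv.
      + intros t Ht. specialize (Hsuper t Ht).
        assert (d * (- l1 * v t + (w2 t - l2 * w1 t)) = d * w2 t - c * w1 t - b * w t)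
          by (unfold v; rewrite <- Hsum; replace b with (- (d * (l1 * l2))) by lra; ring).
        pose proof (exp_pos (- l1 * t)). nra. }
  apply (exp_weighted_nonneg (- l2)); [lra | now exists A |].
  apply (nonincreasing_of_derive_nonpos _ (fun t => exp (- l2 * t) * (- l2 * w t + w1 t))).
  - intros t. apply (continuous_of_is_derive _ _ _ (is_derive_exp_mul _ _ _ _ (Dw t))).
  - intros t _. apply is_derive_exp_mul, Dw.
  - intros t _. pose proof (exp_pos (- l2 * t)). specialize (Hv t). unfold v in Hv. nra.
Qed.

Lemma ex_RInt_continuous_R (g : R -> R) a b : (forall s, continuous g s) -> ex_RInt g a b.
Proof. intros Hg. apply (@ex_RInt_continuous R_CompleteNormedModule). intros; apply Hg. Qed.

Lemma abs_RInt_le_exp (g : R -> R) M k x y : 0 < k ->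
  (forall s, continuous g s) -> (forall s, Rabs (g s) <= M * exp (k * s)) ->
  Rabs (RInt g x y) <= M / k * exp (k * Rmax x y).
Proof.
  intros Hk Hg Hdom.
  assert (HM : 0 <= M).
  { pose proof (Rle_trans _ _ _ (Rabs_pos _) (Hdom 0)). pose proof (exp_pos (k * 0)). nra. }
  assert (Hle : forall x y, x <= y -> Rabs (RInt g x y) <= M / k * exp (k * y)).
  { clear x y. intros x y Hxy.
    assert (Hprim : forall s, is_derive (fun s => M / k * exp (k * s)) s (M * exp (k * s))).
    { intros s. auto_derive; [exact I | field; lra]. }
    assert (Hint : is_RInt (fun s => M * exp (k * s)) x y
                     (M / k * exp (k * y) - M / k * exp (k * x))).
    { apply (is_RInt_derive (fun s => M / k * exp (k * s))); intros s _; [apply Hprim|].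
      apply continuous_Rscal, (continuous_of_is_derive _ _ (k * exp (k * s))).
      auto_derive; [exact I | ring]. }
    eapply Rle_trans; [apply abs_RInt_le; [exact Hxy | now apply ex_RInt_continuous_R]|].
    eapply Rle_trans.
    - apply (RInt_le _ (fun s => M * exp (k * s)) x y Hxy); [|eexists; exact Hint|].
      + apply ex_RInt_norm, ex_RInt_continuous_R, Hg.
      + intros s _. apply Hdom.
    - rewrite (is_RInt_unique _ _ _ _ Hint).
      pose proof (exp_pos (k * x)). assert (0 <= M / k) by (apply Rdiv_le_0_compat; lra). nra. }
  destruct (Rle_or_lt x y) as [Hxy | Hyx].
  - rewrite Rmax_right by exact Hxy. now apply Hle.
  - rewrite Rmax_left, <- opp_RInt_swap by (lra || now apply ex_RInt_continuous_R).
    change (Rabs (- RInt g y x) <= M / k * exp (k * x)).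
    rewrite Rabs_Ropp. apply Hle. lra.
Qed.

Lemma is_RInt_gen_of_filterlim (F G : (R -> Prop) -> Prop) {FF : Filter F} {FG : Filter G}
  (g : R -> R) L : (forall s, continuous g s) ->
  filterlim (fun ab : R * R => RInt g (fst ab) (snd ab)) (filter_prod F G) (locally L) ->
  is_RInt_gen g F G L.
Proof.
  intros Hg Hlim P HP. specialize (Hlim P HP). unfold filtermapi.
  eapply filter_imp; [|exact Hlim].
  intros ab Hab. exists (RInt g (fst ab) (snd ab)). split; [|exact Hab].
  apply (@RInt_correct R_CompleteNormedModule), ex_RInt_continuous_R, Hg.
Qed.

Lemma abs_le_of_filterlim {T} (F : (T -> Prop) -> Prop) {FF : ProperFilter F}
  (u : T -> R) L B : filterlim u F (locally L) -> F (fun x => Rabs (u x) <= B) ->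
  Rabs L <= B.
Proof.
  intros Hlim HB. apply Rabs_le.
  assert (HB' : F (fun x => - B <= u x <= B))
    by (eapply filter_imp; [|exact HB]; intros x Hx; now apply Rabs_le_between).
  split.
  - assert (H := filterlim_le (F := F) (fun _ => - B) u (- B) L). simpl in H.
    apply H; [| apply filterlim_const | exact Hlim].
    eapply filter_imp; [|exact HB']. intros x Hx; apply Hx.
  - assert (H := filterlim_le (F := F) u (fun _ => B) L B). simpl in H.
    apply H; [| exact Hlim | apply filterlim_const].
    eapply filter_imp; [|exact HB']. intros x Hx; apply Hx.
Qed.

Lemma is_RInt_gen_exp_dominated (g : R -> R) M k b : 0 < k ->
  (forall s, continuous g s) -> (forall s, Rabs (g s) <= M * exp (k * s)) ->
  exists L, is_RInt_gen g (Rbar_locally m_infty) (at_point b) L /\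
            Rabs L <= M / k * exp (k * b).
Proof.
  intros Hk Hg Hdom.
  assert (HM : 0 <= M).
  { pose proof (Rle_trans _ _ _ (Rabs_pos _) (Hdom 0)). pose proof (exp_pos (k * 0)). nra. }
  assert (Hproper : ProperFilter (filter_prod (Rbar_locally m_infty) (at_point b)))
    by apply filter_prod_proper.
  destruct (proj1 (filterlim_locally_cauchy (U := R_CompleteSpace)
                     (fun ab : R * R => RInt g (fst ab) (snd ab)))) as [L HL].
  - intros eps. pose proof (cond_pos eps) as Heps.
    destruct (exp_small_left k (eps * k / (M + 1)) b Hk) as [N [HNb HN]].
    { apply Rdiv_lt_0_compat; [apply Rmult_lt_0_compat|]; lra. }
    exists (fun ab : R * R => fst ab < N /\ snd ab = b). split.
    + apply Filter_prod with (fun x => x < N) (fun y => y = b); [now exists N | easy |].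
      intros x y Hx Hy. now split.
    + intros [u1 u2] [v1 v2] [Hu1 Hu2] [Hv1 Hv2]. simpl in *. subst u2 v2.
      change (Rabs (RInt g v1 b - RInt g u1 b) < eps).
      rewrite <- (RInt_Chasles g v1 u1 b) by now apply ex_RInt_continuous_R.
      unfold Rminus. rewrite Rplus_assoc, Rplus_opp_r, Rplus_0_r.
      eapply Rle_lt_trans; [apply (abs_RInt_le_exp g M k v1 u1 Hk Hg Hdom)|].
      assert (exp (k * Rmax v1 u1) < exp (k * N))
        by (apply exp_increasing, Rmult_lt_compat_l; [lra | now apply Rmax_lub_lt]).
      assert (M / k * exp (k * Rmax v1 u1) <= M / k * (eps * k / (M + 1)))
        by (apply Rmult_le_compat_l; [apply Rdiv_le_0_compat|]; lra).
      replace (M / k * (eps * k / (M + 1))) with (eps * (M / (M + 1))) in * by (field; lra).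
      assert (M / (M + 1) < 1)
        by (apply (Rmult_lt_reg_r (M + 1)); [lra|]; field_simplify; lra).
      nra.
  - exists L. split; [exact (is_RInt_gen_of_filterlim _ _ g L Hg HL)|].
    apply (abs_le_of_filterlim _ _ L _ HL).
    apply Filter_prod with (fun x => x < b) (fun y => y = b); [now exists b | easy |].
    intros x y Hx ->. simpl. rewrite <- (Rmax_right x b) at 2 by lra.
    now apply abs_RInt_le_exp.
Qed.

Lemma is_RInt_gen_reflect (g : R -> R) a L :
  is_RInt_gen (fun s => g (- s)) (Rbar_locally m_infty) (at_point (- a)) L ->
  is_RInt_gen g (at_point a) (Rbar_locally p_infty) L.
Proof.
  intros H P HP. destruct (H P HP) as [Q R [N HQ] HR HQR].
  apply Filter_prod with (fun x => x = a) (fun y => Q (- y)); [easy | |].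
  { exists (- N). intros y Hy. apply HQ. lra. }
  intros x y -> Hy. destruct (HQR (- y) (- a) Hy HR) as [l [Hl Pl]].
  exists l. split; [|exact Pl]. simpl in Hl |- *.
  apply is_RInt_comp_opp, is_RInt_swap, is_RInt_opp in Hl.
  rewrite opp_opp in Hl. apply (is_RInt_ext _ _ _ _ _ (fun s _ => opp_opp _)) in Hl.
  revert Hl. apply is_RInt_ext. intros s _. now rewrite Ropp_involutive.
Qed.

Definition conv_left (l : R) (h : R -> R) (t : R) : R :=
  RInt_gen (fun s => exp (l * (t - s)) * h s) (Rbar_locally m_infty) (at_point t).

Definition conv_right (l : R) (h : R -> R) (t : R) : R :=
  RInt_gen (fun s => exp (l * (t - s)) * h s) (at_point t) (Rbar_locally p_infty).

Section Convolution.

Variables (h : R -> R) (M : R).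
Hypotheses (Hh : forall s, continuous h s) (HM : forall s, Rabs (h s) <= M).

Lemma conv_left_spec l t : l < 0 ->
  exists L, is_RInt_gen (fun s => exp (- l * s) * h s) (Rbar_locally m_infty) (at_point t) L /\
    Rabs L <= M / (- l) * exp (- l * t) /\
    is_RInt_gen (fun s => exp (l * (t - s)) * h s) (Rbar_locally m_infty) (at_point t)
      (conv_left l h t) /\
    conv_left l h t = exp (l * t) * L.
Proof.
  intros Hl.
  destruct (is_RInt_gen_exp_dominated (fun s => exp (- l * s) * h s) M (- l) t)
    as [L [HL HLbound]]; [lra | intros s; now apply continuous_exp_mul | |].
  { intros s. rewrite Rabs_mult, Rabs_pos_eq by (left; apply exp_pos).
    rewrite Rmult_comm. apply Rmult_le_compat_r; [left; apply exp_pos | apply HM]. }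
  assert (Hconv : is_RInt_gen (fun s => exp (l * (t - s)) * h s) (Rbar_locally m_infty)
                   (at_point t) (exp (l * t) * L)).
  { apply (is_RInt_gen_ext (fun s => scal (exp (l * t)) (exp (- l * s) * h s))).
    - apply filter_forall. intros ab s _.
      change (exp (l * t) * (exp (- l * s) * h s) = exp (l * (t - s)) * h s).
      rewrite <- Rmult_assoc, <- exp_plus. f_equal. f_equal. ring.
    - exact (is_RInt_gen_scal _ (exp (l * t)) L HL). }
  assert (Hval : conv_left l h t = exp (l * t) * L) by exact (is_RInt_gen_unique _ _ Hconv).
  exists L. rewrite Hval. repeat split; assumption.
Qed.

Lemma abs_conv_left_le l t : l < 0 -> Rabs (conv_left l h t) <= M / (- l).
Proof.
  intros Hl. destruct (conv_left_spec l t Hl) as [L [_ [HL [_ ->]]]].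
  rewrite Rabs_mult, Rabs_pos_eq by (left; apply exp_pos).
  apply Rle_trans with (exp (l * t) * (M / - l * exp (- l * t))).
  - apply Rmult_le_compat_l; [left; apply exp_pos | exact HL].
  - right. replace (exp (l * t) * (M / - l * exp (- l * t)))
      with (M / - l * exp (l * t + - l * t)) by (rewrite exp_plus; ring).
    replace (l * t + - l * t) with 0 by ring. rewrite exp_0. ring.
Qed.

Lemma is_derive_conv_left l t : l < 0 ->
  is_derive (conv_left l h) t (l * conv_left l h t + h t).
Proof.
  intros Hl. set (g := fun s => exp (- l * s) * h s).
  assert (Hg : forall s, continuous g s) by (intros s; apply continuous_exp_mul, Hh).
  destruct (conv_left_spec l 0 Hl) as [L0 [HL0 _]].
  assert (Hconv : forall x, conv_left l h x = exp (l * x) * (L0 + RInt g 0 x)).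
  { intros x. destruct (conv_left_spec l x Hl) as [L [HL [_ [_ ->]]]]. f_equal.
    assert (HL' := is_RInt_gen_Chasles g 0 L0 (RInt g 0 x) HL0
      (proj2 (is_RInt_gen_at_point _ _ _ _)
         (RInt_correct _ _ _ (ex_RInt_continuous_R g 0 x Hg)))).
    rewrite <- (is_RInt_gen_unique _ _ HL). exact (is_RInt_gen_unique _ _ HL'). }
  assert (Hint : is_derive (fun x => L0 + RInt g 0 x) t (g t)).
  { rewrite <- (Rplus_0_l (g t)). apply (is_derive_plus (fun _ => L0));
      [apply (@is_derive_const R_AbsRing R_NormedModule)|].
    apply (is_derive_RInt g _ 0); [|apply Hg].
    apply filter_forall. intros x.
    apply (@RInt_correct R_CompleteNormedModule), ex_RInt_continuous_R, Hg. }
  apply (is_derive_ext (fun x => exp (l * x) * (L0 + RInt g 0 x))); [intros; now rewrite Hconv|].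
  replace (l * conv_left l h t + h t)
    with (exp (l * t) * (l * (L0 + RInt g 0 t) + g t)).
  - exact (is_derive_exp_mul l (fun x => L0 + RInt g 0 x) t _ Hint).
  - assert (E : exp (l * t) * exp (- l * t) = 1).
    { rewrite <- exp_plus. replace (l * t + - l * t) with 0 by ring. apply exp_0. }
    rewrite Hconv. unfold g.
    rewrite Rmult_plus_distr_l, <- (Rmult_assoc (exp (l * t)) (exp (- l * t))), E. ring.
Qed.

End Convolution.

Lemma continuous_comp_opp (h : R -> R) : (forall s, continuous h s) ->
  forall s, continuous (fun u => h (- u)) s.
Proof.
  intros Hh s. apply (continuous_comp (fun u => - u) h); [|apply Hh].
  apply (continuous_of_is_derive _ _ (-1)). auto_derive; [exact I | ring].
Qed.

Lemma conv_right_reflect (h : R -> R) M l t : (forall s, continuous h s) ->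
  (forall s, Rabs (h s) <= M) -> 0 < l ->
  conv_right l h t = conv_left (- l) (fun u => h (- u)) (- t).
Proof.
  intros Hh HM Hl.
  destruct (conv_left_spec (fun u => h (- u)) M (continuous_comp_opp h Hh) (fun s => HM (- s))
              (- l) (- t))
    as [_ [_ [_ [Hconv _]]]]; [lra|].
  unfold conv_right. apply is_RInt_gen_unique, is_RInt_gen_reflect.
  revert Hconv. apply is_RInt_gen_ext, filter_forall. intros ab s _.
  f_equal. f_equal. ring.
Qed.

Lemma abs_conv_right_le (h : R -> R) M l t : (forall s, continuous h s) ->
  (forall s, Rabs (h s) <= M) -> 0 < l -> Rabs (conv_right l h t) <= M / l.
Proof.
  intros Hh HM Hl. rewrite (conv_right_reflect h M l t Hh HM Hl).
  replace (M / l) with (M / - - l) by now rewrite Ropp_involutive.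
  apply abs_conv_left_le; [now apply continuous_comp_opp | intros s; apply HM | lra].
Qed.

Lemma is_derive_conv_right (h : R -> R) M l t : (forall s, continuous h s) ->
  (forall s, Rabs (h s) <= M) -> 0 < l ->
  is_derive (conv_right l h) t (l * conv_right l h t - h t).
Proof.
  intros Hh HM Hl.
  apply (is_derive_ext (fun x => conv_left (- l) (fun u => h (- u)) (- x)));
    [intros x; symmetry; now apply (conv_right_reflect h M)|].
  rewrite (conv_right_reflect h M l t Hh HM Hl).
  replace (l * conv_left (- l) (fun u => h (- u)) (- t) - h t)
    with (- 1 * (- l * conv_left (- l) (fun u => h (- u)) (- t) + h (- - t)))
    by (rewrite Ropp_involutive; ring).
  apply (is_derive_comp (conv_left (- l) (fun u => h (- u))) (fun x => - x)).
  - exact (is_derive_conv_left (fun u => h (- u)) M (continuous_comp_opp h Hh)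
             (fun s => HM (- s)) (- l) (- t) ltac:(lra)).
  - auto_derive; [exact I | ring].
Qed.

Definition bounded_C2 (w w1 w2 : R -> R) : Prop :=
  (forall t, is_derive w t (w1 t)) /\ (forall t, is_derive w1 t (w2 t)) /\
  (forall t, continuous w2 t) /\
  (exists A, forall t, Rabs (w t) <= A) /\ (exists B, forall t, Rabs (w1 t) <= B) /\
  (exists C, forall t, Rabs (w2 t) <= C).

Lemma quasi_C2_of_bounded_C2 w w1 w2 : bounded_C2 w w1 w2 -> quasi_C2 w w1 w2.
Proof.
  intros [Dw [Dw1 [_ [Bw [Bw1 _]]]]].
  split; [exact Dw|]. split; [intros t; exact (continuous_of_is_derive _ _ _ (Dw1 t))|].
  split; [intros t _; apply Dw1|]. now split.
Qed.

Lemma bounded_C2_shift w w1 w2 a : bounded_C2 w w1 w2 ->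
  bounded_C2 (fun t => w (t + a)) (fun t => w1 (t + a)) (fun t => w2 (t + a)).
Proof.
  assert (Hshift : forall (u : R -> R) du t, is_derive u (t + a) du ->
                     is_derive (fun s => u (s + a)) t du).
  { intros u du t Hu. rewrite <- (Rmult_1_l du).
    apply (is_derive_comp u (fun s => s + a)); [exact Hu|].
    auto_derive; [exact I | ring]. }
  intros [Dw [Dw1 [Cw2 [[A HA] [[B HB] [C HC]]]]]].
  split; [intros t; apply Hshift, Dw|]. split; [intros t; apply Hshift, Dw1|].
  split.
  - intros t. apply (continuous_comp (fun s => s + a) w2); [|apply Cw2].
    apply (continuous_of_is_derive _ _ 1). auto_derive; [exact I | ring].
  - split; [now exists A|]. split; [now exists B | now exists C].
Qed.

Lemma quasi_C2_minus u u1 u2 v v1 v2 : quasi_C2 u u1 u2 -> quasi_C2 v v1 v2 ->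
  quasi_C2 (fun t => u t - v t) (fun t => u1 t - v1 t) (fun t => u2 t - v2 t).
Proof.
  intros [Du [Cu1 [Du1 [[Au HAu] [Bu HBu]]]]] [Dv [Cv1 [Dv1 [[Av HAv] [Bv HBv]]]]].
  assert (Habs : forall x y A B, Rabs x <= A -> Rabs y <= B -> Rabs (x - y) <= A + B).
  { intros x y A B Hx Hy. unfold Rminus. eapply Rle_trans; [apply Rabs_triang|].
    rewrite Rabs_Ropp. lra. }
  split; [intros t; apply (is_derive_minus u v); [apply Du | apply Dv]|].
  split; [intros t; apply continuous_Rminus; [apply Cu1 | apply Cv1]|].
  split; [intros t Ht; apply (is_derive_minus u1 v1); [now apply Du1 | now apply Dv1]|].
  split; [exists (Au + Av) | exists (Bu + Bv)]; intros t; now apply Habs.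
Qed.

Definition green_coef c d b := / (d * (lam2 c d b - lam1 c d b)).

(* [Gsol c (D i) (beta i)] is the i-th component of the paper's G; [Gsol_d1] and [Gsol_d2] are
   its first two derivatives. *)
Definition Gsol c d b (h : R -> R) t :=
  green_coef c d b * (conv_left (lam1 c d b) h t + conv_right (lam2 c d b) h t).

Definition Gsol_d1 c d b (h : R -> R) t :=
  green_coef c d b *
  (lam1 c d b * conv_left (lam1 c d b) h t + lam2 c d b * conv_right (lam2 c d b) h t).

Definition Gsol_d2 c d b (h : R -> R) t :=
  green_coef c d b *
  (lam1 c d b * (lam1 c d b * conv_left (lam1 c d b) h t + h t) +
   lam2 c d b * (lam2 c d b * conv_right (lam2 c d b) h t - h t)).

Lemma Rabs_lincomb_le x y p q u v : Rabs x <= p -> Rabs y <= q ->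
  Rabs (u * x + v * y) <= Rabs u * p + Rabs v * q.
Proof.
  intros Hx Hy. eapply Rle_trans; [apply Rabs_triang|]. rewrite !Rabs_mult.
  apply Rplus_le_compat; apply Rmult_le_compat_l; auto using Rabs_pos.
Qed.

Section GreenOperator.

Variables (c d b M : R) (h : R -> R).
Hypotheses (Hd : 0 < d) (Hb : 0 < b).

Lemma Gsol_ode t : d * Gsol_d2 c d b h t - c * Gsol_d1 c d b h t - b * Gsol c d b h t = - h t.
Proof.
  pose proof (lam1_neg c d b Hd Hb) as Hl1. pose proof (lam2_pos c d b Hd Hb) as Hl2.
  assert (E1 : d * lam1 c d b ^ 2 - c * lam1 c d b - b = 0)
    by (rewrite char_poly_factor by assumption; ring).
  assert (E2 : d * lam2 c d b ^ 2 - c * lam2 c d b - b = 0)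
    by (rewrite char_poly_factor by assumption; ring).
  unfold Gsol, Gsol_d1, Gsol_d2, green_coef.
  set (l1 := lam1 c d b) in *. set (l2 := lam2 c d b) in *.
  set (P := conv_left l1 h t). set (Q := conv_right l2 h t).
  transitivity (/ (d * (l2 - l1)) *
    (P * (d * l1 ^ 2 - c * l1 - b) + Q * (d * l2 ^ 2 - c * l2 - b) + d * (l1 - l2) * h t));
    [ring|].
  rewrite E1, E2. field. split; lra.
Qed.

Hypotheses (Hh : forall s, continuous h s) (HM : forall s, Rabs (h s) <= M).

Let conv_left_derive t : is_derive (conv_left (lam1 c d b) h) t
              (lam1 c d b * conv_left (lam1 c d b) h t + h t).
Proof. apply (is_derive_conv_left h M Hh HM), lam1_neg; assumption. Qed.

Let conv_right_derive t : is_derive (conv_right (lam2 c d b) h) t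
              (lam2 c d b * conv_right (lam2 c d b) h t - h t).
Proof. apply (is_derive_conv_right h M), lam2_pos; assumption. Qed.

Let conv_left_bound t : Rabs (conv_left (lam1 c d b) h t) <= M / - lam1 c d b.
Proof. apply (abs_conv_left_le h M Hh HM), lam1_neg; assumption. Qed.

Let conv_right_bound t : Rabs (conv_right (lam2 c d b) h t) <= M / lam2 c d b.
Proof. apply (abs_conv_right_le h M), lam2_pos; assumption. Qed.

Lemma Gsol_bounded_C2 : bounded_C2 (Gsol c d b h) (Gsol_d1 c d b h) (Gsol_d2 c d b h).
Proof.
  unfold Gsol, Gsol_d1, Gsol_d2.
  set (l1 := lam1 c d b) in *. set (l2 := lam2 c d b) in *. set (k := green_coef c d b).
  assert (conv_left_cont : forall t, continuous (conv_left l1 h) t)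
    by (intros t; exact (continuous_of_is_derive _ _ _ (conv_left_derive t))).
  assert (conv_right_cont : forall t, continuous (conv_right l2 h) t)
    by (intros t; exact (continuous_of_is_derive _ _ _ (conv_right_derive t))).
  split.
  { intros t.
    replace (k * (l1 * conv_left l1 h t + l2 * conv_right l2 h t))
      with (k * ((l1 * conv_left l1 h t + h t) + (l2 * conv_right l2 h t - h t))) by ring.
    apply is_derive_scal, (is_derive_plus (conv_left l1 h));
      [apply conv_left_derive | apply conv_right_derive]. }
  split.
  { intros t. apply is_derive_scal.
    apply (is_derive_plus (fun t => l1 * conv_left l1 h t)); apply is_derive_scal;
      [apply conv_left_derive | apply conv_right_derive]. }
  split.
  { intros t. apply continuous_Rscal.
    apply (continuous_Rplus (fun t => l1 * (l1 * conv_left l1 h t + h t)));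
      apply continuous_Rscal.
    - apply (continuous_Rplus (fun t => l1 * conv_left l1 h t)); [apply continuous_Rscal|]; auto.
    - apply (continuous_Rminus (fun t => l2 * conv_right l2 h t));
        [apply continuous_Rscal|]; auto. }
  split.
  { exists (Rabs k * (M / - l1) + Rabs k * (M / l2)). intros t.
    rewrite Rmult_plus_distr_l. now apply Rabs_lincomb_le. }
  split.
  { exists (Rabs (k * l1) * (M / - l1) + Rabs (k * l2) * (M / l2)). intros t.
    replace (k * (l1 * conv_left l1 h t + l2 * conv_right l2 h t))
      with (k * l1 * conv_left l1 h t + k * l2 * conv_right l2 h t) by ring.
    now apply Rabs_lincomb_le. }
  exists (Rabs (k * l1 * l1) * (M / - l1) + Rabs (k * l2 * l2) * (M / l2)
          + Rabs (k * (l1 - l2)) * M).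
  intros t.
  replace (k * (l1 * (l1 * conv_left l1 h t + h t) + l2 * (l2 * conv_right l2 h t - h t)))
    with ((k * l1 * l1 * conv_left l1 h t + k * l2 * l2 * conv_right l2 h t)
          + k * (l1 - l2) * h t)
    by ring.
  eapply Rle_trans; [apply Rabs_triang|]. apply Rplus_le_compat; [now apply Rabs_lincomb_le|].
  rewrite Rabs_mult. apply Rmult_le_compat_l; [apply Rabs_pos | apply HM].
Qed.

End GreenOperator.

Definition lipschitz {n} (g : vfun n) (L : R) : Prop :=
  forall x y i, Rabs (g x i - g y i) <= L * Rabs (x - y).

Lemma lipschitz_of_bounded_derive {n} (g r : vfun n) :
  (forall t i, is_derive (fun s => g s i) t (r t i)) -> Defs.bounded r ->
  exists L, 0 <= L /\ lipschitz g L.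
Proof.
  intros Hg [M HM]. exists (Rabs M). split; [apply Rabs_pos|]. intros x y i.
  destruct (MVT_gen (fun s => g s i) y x (fun s => r s i)) as [z [_ Hz]].
  - intros s _. apply Hg.
  - intros s _. apply continuity_pt_filterlim, (continuous_of_is_derive _ _ _ (Hg s i)).
  - rewrite Hz, Rabs_mult. apply Rmult_le_compat_r; [apply Rabs_pos|].
    eapply Rle_trans; [apply HM | apply Rle_abs].
Qed.

Lemma lipschitz_hat {n} (u : vec n) : lipschitz (hat u) 0.
Proof. intros x y i. unfold hat. rewrite Rminus_diag, Rabs_R0. lra. Qed.

Lemma continuous_of_lipschitz {n} (g : vfun n) L i t : 0 <= L -> lipschitz g L ->
  continuous (fun s => g s i) t.
Proof.
  intros HL Hg. apply continuous_of_eps_delta. intros eps Heps.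
  exists (eps / (L + 1)). split; [apply Rdiv_lt_0_compat; lra|]. intros y Hy.
  eapply Rle_lt_trans; [apply Hg|].
  apply (Rmult_lt_compat_r (L + 1)) in Hy; [|lra].
  unfold Rdiv in Hy. rewrite Rmult_assoc, Rinv_l, Rmult_1_r in Hy by lra.
  pose proof (Rabs_pos (y - t)). nra.
Qed.

Lemma cont_on_comp_lipschitz {n} (g : vfun n) L (u : R -> R) A a b : 0 <= L -> 0 <= A ->
  lipschitz g L -> (forall x y, Rabs (u x - u y) <= A * Rabs (x - y)) ->
  cont_on a b (fun th => g (u th)).
Proof.
  intros HL HA Hg Hu x _ eps Heps. exists (eps / (L * A + 1)).
  split; [apply Rdiv_lt_0_compat; nra|]. intros y _ Hy i.
  eapply Rle_lt_trans; [apply Hg|].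
  apply (Rmult_lt_compat_r (L * A + 1)) in Hy; [|nra].
  unfold Rdiv in Hy. rewrite Rmult_assoc, Rinv_l, Rmult_1_r in Hy by nra.
  specialize (Hu y x). pose proof (Rabs_pos (y - x)). pose proof (Rabs_pos (u y - u x)). nra.
Qed.

Lemma in_Gamma_range {n} (K : vec n) (g : vfun n) : in_Gamma K g -> forall t i, 0 <= g t i <= K i.
Proof.
  intros [_ [Hmon [Hminus Hplus]]] t i. split.
  - apply Rnot_lt_le. intros Hneg.
    destruct (proj2 (is_lim_spec _ _ _) (Hminus i) (mkposreal (- g t i) ltac:(lra))) as [N HN].
    specialize (HN (Rmin t (N - 1)) ltac:(pose proof (Rmin_r t (N - 1)); simpl; lra)).
    specialize (Hmon _ _ i (Rmin_l t (N - 1))).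
    simpl in HN. rewrite Rminus_0_r in HN. apply Rabs_lt_between in HN. lra.
  - apply Rnot_lt_le. intros Hbig.
    destruct (proj2 (is_lim_spec _ _ _) (Hplus i) (mkposreal (g t i - K i) ltac:(lra))) as [N HN].
    specialize (HN (Rmax t (N + 1)) ltac:(pose proof (Rmax_r t (N + 1)); simpl; lra)).
    specialize (Hmon _ _ i (Rmax_l t (N + 1))).
    simpl in HN. apply Rabs_lt_between in HN. lra.
Qed.

Lemma quasi_C2_of_quasi_regular {n} (rho r1 r2 : vfun n) i : quasi_regular rho r1 r2 ->
  quasi_C2 (fun t => rho t i) (fun t => r1 t i) (fun t => r2 t i).
Proof.
  intros [Drho [Cr1 [[A HA] [[B HB] [Dr1 _]]]]].
  split; [intros t; apply Drho|]. split; [intros t; apply Cr1|].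
  split; [intros t Ht; now apply Dr1|].
  split; [exists A | exists B]; intros t; [apply HA | apply HB].
Qed.

Section QuasiMonotone.

Variables (n : nat) (tau c : R) (K beta : vec n) (f : vfun n -> vec n).

Hypothesis f_quasi_monotone :
  forall ph ps : vfun n, cont_on (- (c * tau)) 0 ph -> cont_on (- (c * tau)) 0 ps ->
    (forall th, - (c * tau) <= th <= 0 ->
       vle vzero (ps th) /\ vle (ps th) (ph th) /\ vle (ph th) K) ->
    forall i, f_c c f ph i - f_c c f ps i + beta i * (ph 0 i - ps 0 i) >= 0.

Lemma Hop_le (g1 g2 : vfun n) L1 L2 s t i : 0 <= L1 -> lipschitz g1 L1 ->
  0 <= L2 -> lipschitz g2 L2 ->
  (forall th, - (c * tau) <= th <= 0 ->
     vle vzero (g1 (s + th)) /\ vle (g1 (s + th)) (g2 (t + th)) /\ vle (g2 (t + th)) K) ->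
  Hop c f beta g1 s i <= Hop c f beta g2 t i.
Proof.
  intros HL1 Hg1 HL2 Hg2 Hrange.
  assert (Hshift : forall (g : vfun n) L x, 0 <= L -> lipschitz g L ->
                     cont_on (- (c * tau)) 0 (shift g x)).
  { intros g L x HL Hg. apply (cont_on_comp_lipschitz g L (fun th => x + th) 1);
      [exact HL | lra | exact Hg |].
    intros y z. replace (x + y - (x + z)) with (y - z) by ring. lra. }
  assert (H := f_quasi_monotone (shift g2 t) (shift g1 s)
                 (Hshift g2 L2 t HL2 Hg2) (Hshift g1 L1 s HL1 Hg1) Hrange i).
  unfold Hop, shift in *. rewrite !Rplus_0_r in H. lra.
Qed.

End QuasiMonotone.

Lemma Hop_hat {n} c f (beta u : vec n) t i :
  Hop c f beta (hat u) t i = f (hat u) i + beta i * u i.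
Proof. reflexivity. Qed.

Lemma Hop_continuous {n} tau c (f : vfun n -> vec n) (beta : vec n) (g : vfun n) L i t :
  f_continuous tau f -> 0 <= L -> lipschitz g L ->
  continuous (fun s => Hop c f beta g s i) t.
Proof.
  intros Hf HL Hg. apply (continuous_Rplus (fun s => f_c c f (shift g s) i)).
  - assert (Hcomp : forall x, cont_on (- tau) 0 (fun th => g (x + c * th))).
    { intros x. apply (cont_on_comp_lipschitz g L _ (Rabs c));
        [exact HL | apply Rabs_pos | exact Hg|].
      intros y z. replace (x + c * y - (x + c * z)) with (c * (y - z)) by ring.
      rewrite Rabs_mult. lra. }
    apply continuous_of_eps_delta. intros eps Heps.
    destruct (Hf _ (Hcomp t) eps Heps) as [delta [Hdelta Hclose]].
    exists (delta / (L + 1)). split; [apply Rdiv_lt_0_compat; lra|]. intros y Hy.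
    apply (Hclose _ (Hcomp y)). intros th _ j. eapply Rle_lt_trans; [apply Hg|].
    replace (y + c * th - (t + c * th)) with (y - t) by ring.
    apply (Rmult_lt_compat_r (L + 1)) in Hy; [|lra].
    unfold Rdiv in Hy. rewrite Rmult_assoc, Rinv_l, Rmult_1_r in Hy by lra.
    pose proof (Rabs_pos (y - t)). nra.
  - apply continuous_Rscal. now apply (continuous_of_lipschitz g L).
Qed.

Section MonotoneIteration.

Variables (n : nat) (tau c : R) (D K beta : vec n) (f : vfun n -> vec n).
Variables (phi phi0 p1 p2 q1 q2 : vfun n).

Hypotheses (HD : forall i, 0 < D i) (Hbeta : forall i, 0 < beta i).
Hypotheses (Hcont : f_continuous tau f)
  (Hf0 : forall i, f (hat vzero) i = 0) (HfK : forall i, f (hat K) i = 0).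
Hypothesis f_quasi_monotone :
  forall ph ps : vfun n, cont_on (- (c * tau)) 0 ph -> cont_on (- (c * tau)) 0 ps ->
    (forall th, - (c * tau) <= th <= 0 ->
       vle vzero (ps th) /\ vle (ps th) (ph th) /\ vle (ph th) K) ->
    forall i, f_c c f ph i - f_c c f ps i + beta i * (ph 0 i - ps 0 i) >= 0.
Hypotheses (Gphi : in_Gamma K phi) (Gphi0 : in_Gamma K phi0)
  (Rphi : quasi_regular phi p1 p2) (Rphi0 : quasi_regular phi0 q1 q2)
  (Wphi : forall t i, t <> 0 -> wave c D f phi p1 p2 t i >= 0)
  (Wphi0 : forall t i, t <> 0 -> wave c D f phi0 q1 q2 t i <= 0)
  (Hle : forall t i, phi t i <= phi0 t i).

Let h := Hop c f beta phi0.
Let phi1 := Gop c D beta h.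
Let r1 : vfun n := fun t i => Gsol_d1 c (D i) (beta i) (fun s => h s i) t.
Let r2 : vfun n := fun t i => Gsol_d2 c (D i) (beta i) (fun s => h s i) t.

Let lipschitz_phi : exists L, 0 <= L /\ lipschitz phi L.
Proof. destruct Rphi as [Dp [_ [_ [Bp1 _]]]]. exact (lipschitz_of_bounded_derive _ _ Dp Bp1). Qed.

Let lipschitz_phi0 : exists L, 0 <= L /\ lipschitz phi0 L.
Proof. destruct Rphi0 as [Dq [_ [_ [Bq1 _]]]]. exact (lipschitz_of_bounded_derive _ _ Dq Bq1). Qed.

Let h_range t i : 0 <= h t i <= beta i * K i.
Proof.
  destruct lipschitz_phi0 as [L [HL Hlip]].
  pose proof (in_Gamma_range K phi0 Gphi0) as Hr.
  split.
  - assert (H : Hop c f beta (hat vzero) t i <= h t i).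
    { apply (Hop_le n tau c K beta f f_quasi_monotone _ _ 0 L);
        [lra | apply lipschitz_hat | exact HL | exact Hlip |].
      intros th _. unfold vle, vzero, hat. split; [|split]; intros j; [lra | apply Hr | apply Hr]. }
    rewrite Hop_hat, Hf0 in H. unfold vzero in H. lra.
  - assert (H : h t i <= Hop c f beta (hat K) t i).
    { apply (Hop_le n tau c K beta f f_quasi_monotone _ _ L 0);
        [exact HL | exact Hlip | lra | apply lipschitz_hat |].
      intros th _. unfold vle, vzero, hat. split; [|split]; intros j; [apply Hr | apply Hr | lra]. }
    rewrite Hop_hat, HfK in H. lra.
Qed.

Let h_nondecreasing t s i : t <= s -> h t i <= h s i.
Proof.
  intros Hts. destruct lipschitz_phi0 as [L [HL Hlip]].
  pose proof (in_Gamma_range K phi0 Gphi0) as Hr. destruct Gphi0 as [_ [Hmon _]].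
  apply (Hop_le n tau c K beta f f_quasi_monotone _ _ L L); try assumption.
  intros th _. split; [|split]; intros j; [apply Hr | apply Hmon; lra | apply Hr].
Qed.

Let Hop_phi_le_h t i : Hop c f beta phi t i <= h t i.
Proof.
  destruct lipschitz_phi as [L [HL Hlip]]. destruct lipschitz_phi0 as [L0 [HL0 Hlip0]].
  apply (Hop_le n tau c K beta f f_quasi_monotone _ _ L L0); try assumption.
  intros th _. split; [|split]; intros j;
    [apply (in_Gamma_range K phi Gphi) | apply Hle | apply (in_Gamma_range K phi0 Gphi0)].
Qed.

Let phi1_bounded_C2 i : bounded_C2 (fun t => phi1 t i) (fun t => r1 t i) (fun t => r2 t i).
Proof.
  destruct lipschitz_phi0 as [L [HL Hlip]].
  apply (Gsol_bounded_C2 c (D i) (beta i) (beta i * K i)); [apply HD | apply Hbeta | |].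
  - intros t. exact (Hop_continuous tau c f beta phi0 L i t Hcont HL Hlip).
  - intros t. apply Rabs_le. pose proof (h_range t i). lra.
Qed.

Let phi1_ode t i : D i * r2 t i - c * r1 t i - beta i * phi1 t i = - h t i.
Proof. exact (Gsol_ode c (D i) (beta i) (fun s => h s i) (HD i) (Hbeta i) t). Qed.

Lemma phi1_le_phi0 t i : phi1 t i <= phi0 t i.
Proof.
  enough (0 <= phi0 t i - phi1 t i) by lra.
  apply (quasi_C2_supersolution_nonneg (D i) c (beta i) (fun s => phi0 s i - phi1 s i)
           (fun s => q1 s i - r1 s i) (fun s => q2 s i - r2 s i) (HD i) (Hbeta i)).
  - apply quasi_C2_minus; [now apply quasi_C2_of_quasi_regular |].
    apply quasi_C2_of_bounded_C2, phi1_bounded_C2.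
  - intros s Hs. specialize (Wphi0 s i Hs). pose proof (phi1_ode s i).
    unfold wave in Wphi0. unfold h, Hop in *. lra.
Qed.

Lemma phi_le_phi1 t i : phi t i <= phi1 t i.
Proof.
  enough (0 <= phi1 t i - phi t i) by lra.
  apply (quasi_C2_supersolution_nonneg (D i) c (beta i) (fun s => phi1 s i - phi s i)
           (fun s => r1 s i - p1 s i) (fun s => r2 s i - p2 s i) (HD i) (Hbeta i)).
  - apply quasi_C2_minus; [|now apply quasi_C2_of_quasi_regular].
    apply quasi_C2_of_bounded_C2, phi1_bounded_C2.
  - intros s Hs. specialize (Wphi s i Hs). pose proof (phi1_ode s i).
    pose proof (Hop_phi_le_h s i). unfold wave in Wphi. unfold Hop in *. lra.
Qed.

(* phi1 (. + a) - phi1 solves the same equation with right-hand side h (. + a) - h >= 0. *)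
Lemma phi1_nondecreasing t s i : t <= s -> phi1 t i <= phi1 s i.
Proof.
  intros Hts. set (a := s - t). replace s with (t + a) by (unfold a; ring).
  enough (0 <= phi1 (t + a) i - phi1 t i) by lra.
  apply (quasi_C2_supersolution_nonneg (D i) c (beta i) (fun x => phi1 (x + a) i - phi1 x i)
           (fun x => r1 (x + a) i - r1 x i) (fun x => r2 (x + a) i - r2 x i) (HD i) (Hbeta i)).
  - apply quasi_C2_minus; apply quasi_C2_of_bounded_C2; [|apply phi1_bounded_C2].
    apply (bounded_C2_shift (fun t => phi1 t i)), phi1_bounded_C2.
  - intros x _. pose proof (phi1_ode (x + a) i). pose proof (phi1_ode x i).
    pose proof (h_nondecreasing x (x + a) i ltac:(unfold a; lra)). lra.
Qed.

Lemma phi1_in_Gamma : in_Gamma K phi1.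
Proof.
  destruct Gphi as [_ [_ [Hphi_minus Hphi_plus]]].
  destruct Gphi0 as [_ [_ [Hphi0_minus Hphi0_plus]]].
  split; [intros t i; apply (continuous_of_is_derive _ _ _ (proj1 (phi1_bounded_C2 i) t))|].
  split; [exact phi1_nondecreasing|].
  split; intros i; apply (is_lim_le_le_loc (fun s => phi s i) (fun s => phi0 s i));
    try (exists 0; intros; split; [apply phi_le_phi1 | apply phi1_le_phi0]);
    auto.
Qed.

Lemma phi1_upper_solution : upper_solution c D f phi1.
Proof.
  assert (Dphi1 : forall t i, is_derive (fun s => phi1 s i) t (r1 t i))
    by (intros t i; apply (phi1_bounded_C2 i)).
  assert (Br1 : Defs.bounded r1).
  { apply bounded_of_components. intros i.
    destruct (phi1_bounded_C2 i) as (_ & _ & _ & _ & H & _). exact H. }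
  exists r1, r2.
  split; [exact Dphi1|].
  split; [intros t i; apply (phi1_bounded_C2 i)|].
  split; [intros t i; apply (phi1_bounded_C2 i)|].
  split.
  { apply bounded_of_components. intros i.
    destruct (phi1_bounded_C2 i) as (_ & _ & _ & H & _). exact H. }
  split; [exact Br1|].
  split.
  { apply bounded_of_components. intros i.
    destruct (phi1_bounded_C2 i) as (_ & _ & _ & _ & _ & H). exact H. }
  intros t i. destruct (lipschitz_of_bounded_derive phi1 r1 Dphi1 Br1) as [L1 [HL1 Hlip1]].
  destruct lipschitz_phi0 as [L0 [HL0 Hlip0]].
  assert (H : Hop c f beta phi1 t i <= h t i).
  { apply (Hop_le n tau c K beta f f_quasi_monotone _ _ L1 L0); try assumption.
    intros th _. unfold vle, vzero. split; [|split]; intros j.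
    - pose proof (in_Gamma_range K phi Gphi (t + th) j). pose proof (phi_le_phi1 (t + th) j). lra.
    - apply phi1_le_phi0.
    - apply (in_Gamma_range K phi0 Gphi0). }
  pose proof (phi1_ode t i). unfold wave. unfold Hop in H. lra.
Qed.

End MonotoneIteration.

Theorem mainTheorem2 (n : nat) (tau c : R) (D K beta : vec n)
  (f : vfun n -> vec n) (phi phi0 : vfun n) :
  (0 < n)%nat -> 0 <= tau -> 0 < c ->
  (forall i, 0 < D i) -> (forall i, 0 < K i) ->
  f_local tau f -> f_continuous tau f ->
  (forall i, f (hat vzero) i = 0) -> (forall i, f (hat K) i = 0) ->
  (forall u : vec n, vle vzero u -> vle u K ->
     ~ (forall i, u i = 0) -> ~ (forall i, u i = K i) ->
     ~ (forall i, f (hat u) i = 0)) ->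
  (forall i, 0 < beta i) ->
  (forall ph ps : vfun n, cont_on (- (c * tau)) 0 ph -> cont_on (- (c * tau)) 0 ps ->
     (forall th, - (c * tau) <= th <= 0 ->
        vle vzero (ps th) /\ vle (ps th) (ph th) /\ vle (ph th) K) ->
     forall i, f_c c f ph i - f_c c f ps i + beta i * (ph 0 i - ps 0 i) >= 0) ->
  in_Gamma K phi -> in_Gamma K phi0 ->
  quasi_lower c D f phi -> quasi_upper c D f phi0 ->
  (forall t i, phi t i <= phi0 t i) ->
  let phi1 := Gop c D beta (Hop c f beta phi0) in
  in_Gamma K phi1 /\
  (upper_solution c D f phi1 /\ forall t i, phi t i <= phi1 t i /\ phi1 t i <= phi0 t i).
Proof.
  intros _ _ _ HD _ _ Hcont Hf0 HfK _ Hbeta Hmono Gphi Gphi0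
    [p1 [p2 [Rphi Wphi]]] [q1 [q2 [Rphi0 Wphi0]]] Hle phi1.
  split; [|split].
  - eapply phi1_in_Gamma with (phi := phi) (p1 := p1) (p2 := p2) (q1 := q1) (q2 := q2);
      eassumption.
  - eapply phi1_upper_solution with (phi := phi) (p1 := p1) (p2 := p2) (q1 := q1) (q2 := q2);
      eassumption.
  - intros t i. split.
    + eapply phi_le_phi1 with (p1 := p1) (p2 := p2) (q1 := q1) (q2 := q2); eassumption.
    + eapply phi1_le_phi0 with (q1 := q1) (q2 := q2); eassumption.
Qed.
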